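(* Let $S$ be a numerical semigroup with embedding dimension $\mathrm e(S)\le 3$. Then $S$ is cyclotomic if and only if $S$ is symmetric.
   Context: A numerical semigroup is a submonoid $S$ of $(\mathbb N,+)$ with $\mathbb N\setminus S$ finite; $\mathrm e(S)$ is the cardinality of its unique minimal generating set. Its Frobenius number $\mathrm F(S)$ is the largest integer not in $S$; $S$ is symmetric if $S\cup(\mathrm F(S)-S)=\mathbb Z$. The semigroup polynomial is $\mathrm P_S(x)=(1-x)\sum_{s\in S}x^s$, and $S$ is cyclotomic if this monic integer polynomial has all its complex roots in the closed unit disc. *)

From mathcomp Require Import all_boot all_order all_algebra all_field.
Set Implicit Arguments. Unset Strict Implicit. Unset Printing Implicit Defensive.
Import Order.TTheory GRing.Theory Num.Theory.

Definition numerical_semigroup (S : pred nat) : Prop :=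
  [/\ S 0,
      (forall a b, S a -> S b -> S (a + b)) &
      exists N, forall n, N <= n -> S n].

Definition generates (A : seq nat) (S : pred nat) : Prop :=
  forall n, S n <-> exists c : seq nat,
     size c = size A /\ n = \sum_(i < size A) nth 0 c i * nth 0 A i.

Definition is_embdim (S : pred nat) (e : nat) : Prop :=
  (exists A, size A = e /\ generates A S) /\
  (forall A, generates A S -> e <= size A).

Definition inS (S : pred nat) (z : int) : bool := (0 <= z)%R && S `|z|%N.

Definition is_frobenius (S : pred nat) (f : int) : Prop :=
  ~~ inS S f /\ forall z : int, (f < z)%R -> inS S z.

Definition symmetric_semigroup (S : pred nat) : Prop :=
  exists f, is_frobenius S f /\ forall z : int, inS S z \/ inS S (f - z)%R.

(* The semigroup polynomial (1-x) * sum_{s in S} x^s, computed with a bound N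
   such that every n >= N lies in S: the coefficient of x^i is
   [i in S] - [i-1 in S], which vanishes for i > N. *)
Definition semigroup_poly (S : pred nat) (N : nat) : {poly int} :=
  \poly_(i < N.+1) ((S i)%:R - ((0 < i)%N && S i.-1)%:R)%R.

(* S cyclotomic: all complex roots of P_S lie in the closed unit disc.
   Roots of an integer polynomial are algebraic, so complex roots = roots
   in algC. *)
Definition cyclotomic_semigroup (S : pred nat) : Prop :=
  exists N, (forall n, N <= n -> S n) /\
    forall z : algC, root (map_poly intr (semigroup_poly S N)) z -> (`|z| <= 1)%R.

(* Cyclotomic implies symmetric for every numerical semigroup: the roots of
   P_S lie in the closed unit disc and their product is +-P_S(0) = +-1, so they
   all lie on the unit circle, where 1/r is the conjugate of r.  Hence the
   integer polynomial P_S is self-reciprocal, and comparing the coefficients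
   [s in S] - [s - 1 in S] at s and F + 1 - s gives s in S <-> F - s notin S.

   Conversely, let S = <n1, n2, n3> be symmetric.  For each generator take the
   least multiple c_i n_i lying in the monoid of the two others.  If one of
   these relations involves a single other generator, S is a gluing
   d <m, m'> + v N, and Ap(S, n1) is a box {a u + k v | a < m, k < d} with
   unique representations, so that
     P_S(x) (1 - x^n1) = (1 - x) (sum_(a < m) x^(a u)) (sum_(k < d) x^(k v))
   and every root of P_S is a root of unity.  Otherwise all six coefficients
   are positive and Ap(S, n1) has two distinct maximal elements, i.e. S has two
   pseudo-Frobenius numbers, which is impossible for a symmetric semigroup. *)

From mathcomp Require Import all_boot all_order all_algebra all_field.
From mathcomp Require Import zify.
From Stdlib Require Import Classical.
Set Implicit Arguments. Unset Strict Implicit. Unset Printing Implicit Defensive.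
Import Order.TTheory GRing.Theory Num.Theory.

Lemma ex_minn_classic (P : nat -> Prop) :
  (exists n, P n) -> exists n, P n /\ forall m, m < n -> ~ P m.
Proof.
move=> [n Pn]; apply: NNPP => noMin; elim/ltn_ind: n Pn => n IH Pn.
by apply: noMin; exists n; split=> // m lt_mn; apply: IH.
Qed.

Lemma coprime_mulnr_mod_inj d v k k' : coprime d v -> k < d -> k' < d ->
  k * v = k' * v %[mod d] -> k = k'.
Proof.
move=> co_dv; wlog le_k'k : k k' / k' <= k => [W lt_kd lt_k'd E|lt_kd _].
  by case: (leqP k' k) => [|/ltnW] le; [exact: W | apply/esym/W].
move/eqP; rewrite eqn_mod_dvd ?leq_mul2r ?le_k'k ?orbT // -mulnBl Gauss_dvdl //.
case: (posnP (k - k')) => [|pos /(dvdn_leq pos)]; lia.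
Qed.

Lemma exists_mulnr_mod m n t : coprime m n -> 0 < n ->
  exists2 a, a < n & a * m = t %[mod n].
Proof.
move=> co_mn n_gt0; set x := chinese m n 0 t.
have x_mod_m : x %% m = 0 by rewrite chinese_modl // mod0n.
exists ((x %/ m) %% n); first exact: ltn_pmod.
by rewrite modnMml -[_ * m]addn0 -x_mod_m -divn_eq chinese_modr.
Qed.

(** * Gluings and Apery boxes *)

Definition cofinite (S : pred nat) := exists N, forall n, N <= n -> S n.

Definition generated3 (S : pred nat) a b c :=
  forall s, S s <-> exists x y z, s = x * a + y * b + z * c.

Definition in_monoid2 b c t := exists x y, t = x * b + y * c.

Lemma generated3_swap12 S a b c : generated3 S a b c -> generated3 S b a c.
Proof. by move=> G s; rewrite G; split=> -[x [y [z ->]]]; exists y, x, z; lia. Qed.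

Lemma generated3_swap23 S a b c : generated3 S a b c -> generated3 S a c b.
Proof. by move=> G s; rewrite G; split=> -[x [y [z ->]]]; exists x, z, y; lia. Qed.

Lemma in_monoid2C b c t : in_monoid2 b c t -> in_monoid2 c b t.
Proof. by move=> [x [y ->]]; exists y, x; lia. Qed.

Lemma sum_ord_size_le3 (A : seq nat) (F : nat -> nat) : size A <= 3 ->
  (forall i, size A <= i -> F i = 0) -> \sum_(i < size A) F i = F 0 + F 1 + F 2.
Proof.
move=> le_A3 F0; rewrite (big_ord_widen 3 F le_A3) big_mkcond !big_ord_recr big_ord0 /=.
have F_if i : (if i < size A then F i else 0) = F i by case: ltnP => // /F0 ->.
by rewrite !F_if add0n.
Qed.

Lemma generated3_of_generates (A : seq nat) (S : pred nat) : generates A S -> size A <= 3 ->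
  generated3 S (nth 0 A 0) (nth 0 A 1) (nth 0 A 2).
Proof.
move=> G le_A3 s; rewrite G.
have term0 (c : seq nat) i : size A <= i -> nth 0 c i * nth 0 A i = 0.
  by move=> le_Ai; rewrite (nth_default 0 le_Ai) muln0.
split=> [[c [_ ->]] | [x [y [z ->]]]].
  exists (nth 0 c 0), (nth 0 c 1), (nth 0 c 2).
  by rewrite (sum_ord_size_le3 (F := fun i => nth 0 c i * nth 0 A i)) // => i /term0.
set c := take (size A) [:: x; y; z].
exists c; split; first by rewrite size_takel.
have c_term i : nth 0 c i * nth 0 A i = nth 0 [:: x; y; z] i * nth 0 A i.
  case: (ltnP i (size A)) => [lt_iA | le_Ai]; first by rewrite /c nth_take.
  by rewrite !term0.
by rewrite (sum_ord_size_le3 (F := fun i => nth 0 c i * nth 0 A i)) ?c_term // => i /term0.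
Qed.

Lemma generated3_coprime (S : pred nat) a b c g :
  cofinite S -> generated3 S a b c ->
  g %| a -> g %| b -> g %| c -> g = 1.
Proof.
move=> [N SN] G g_a g_b g_c.
have g_S s : S s -> g %| s by move=> /G [x [y [z ->]]]; rewrite !dvdn_add ?dvdn_mull.
have := g_S _ (SN N.+1 (leqnSn N)).
by rewrite -addn1 dvdn_addr ?dvdn1 ?g_S ?SN // => /eqP.
Qed.

Definition apery_box (S : pred nat) n u v m d :=
  [/\ 0 < n, 0 < m, 0 < d,
   (forall s, S s <-> exists X a k, [/\ a < m, k < d & s = X * n + a * u + k * v]) &
   (forall X a k X' a' k', a < m -> k < d -> a' < m -> k' < d ->
      X * n + a * u + k * v = X' * n + a' * u + k' * v -> [/\ X = X', a = a' & k = k'])].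

Definition has_apery_box (S : pred nat) := exists n u v m d, apery_box S n u v m d.

(* [shifted S n x] means x in n + S, so that [apery S n] is Ap(S, n). *)
Definition shifted (S : pred nat) n x := (n <= x) && S (x - n).

Definition apery (S : pred nat) n x := S x && ~~ shifted S n x.

Lemma apery_boxP (S : pred nat) n u v m d x : apery_box S n u v m d ->
  apery S n x <-> exists a k, [/\ a < m, k < d & x = a * u + k * v].
Proof.
move=> [n_gt0 _ _ G U]; split.
  move=> /andP [/G [[|X] [a [k [lt_am lt_kd Ex]]]] not_shifted].
    by exists a, k; split => //; lia.
  case/negP: not_shifted; apply/andP; split; first lia.
  by apply/G; exists X, a, k; split => //; lia.
move=> [a [k [lt_am lt_kd Ex]]]; apply/andP; split.
  by apply/G; exists 0, a, k; split => //; lia.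
apply/negP => /andP [le_nx /G [X [a' [k' [lt_a'm lt_k'd Ex']]]]].
by have [] := U 0 a k X.+1 a' k' lt_am lt_kd lt_a'm lt_k'd; lia.
Qed.

Lemma apery_box_addn (S : pred nat) n u v m d :
  apery_box S n u v m d -> forall s, S s -> S (s + n).
Proof.
move=> [_ _ _ G _] s /G [X [a [k [lt_am lt_kd ->]]]].
by apply/G; exists X.+1, a, k; split => //; lia.
Qed.

(* S = d <m, m'> + v N is the gluing of <m, m'> and N. *)
Lemma gluing_apery_box S n v u m m' d x y :
  generated3 S n v u -> n = m * d -> u = m' * d -> coprime m m' -> coprime d v ->
  v = x * m + y * m' -> 0 < m -> 0 < d -> apery_box S n u v m d.
Proof.
move=> G ? ? co_mm' co_dv Ev m_gt0 d_gt0; subst n u.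
split=> //; first by rewrite muln_gt0 m_gt0.
- move=> s; split=> [/G [X [k [a ->]]]|[X [a [k [_ _ ->]]]]]; last first.
    by apply/G; exists X, k, a; lia.
  set q := k %/ d; set a' := a + q * y.
  exists (X + q * x + (a' %/ m) * m'), (a' %% m), (k %% d).
  split; [exact: ltn_pmod | exact: ltn_pmod |].
  have Ea' : (a + q * y) * (m' * d) = (a' %/ m * m + a' %% m) * (m' * d).
    by rewrite -divn_eq.
  rewrite {1}(divn_eq k d) -/q; nia.
- move=> X a k X' a' k' lt_am lt_kd lt_a'm lt_k'd E.
  have Ed : (X * m + a * m') * d + k * v = (X' * m + a' * m') * d + k' * v by nia.
  have {lt_kd lt_k'd} eq_kk' : k = k'.
    apply: (coprime_mulnr_mod_inj co_dv lt_kd lt_k'd).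
    by rewrite -(modnMDl (X * m + a * m')) Ed modnMDl.
  subst k'; move/addIn/eqP: Ed; rewrite eqn_pmul2r // => /eqP Em.
  have eq_aa' : a = a'.
    apply: (coprime_mulnr_mod_inj co_mm' lt_am lt_a'm).
    by rewrite -(modnMDl X) Em modnMDl.
  by subst a'; move/addIn/eqP: Em; rewrite eqn_pmul2r // => /eqP.
Qed.

Definition no_multiple_below a b c k0 :=
  forall k, 0 < k < k0 -> ~ in_monoid2 b c (k * a).

Lemma no_multiple_below23 a b c k0 :
  no_multiple_below a b c k0 -> no_multiple_below a c b k0.
Proof. by move=> H k k_range /in_monoid2C; apply: H. Qed.

Lemma exists_least_multiple a b c : 0 < a -> 0 < b ->
  exists k r s, [/\ 0 < k, k * a = r * b + s * c & no_multiple_below a b c k].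
Proof.
move=> a_gt0 b_gt0.
have [|k [[k_gt0 [r [s Ek]]] kmin]] :=
  @ex_minn_classic (fun k => 0 < k /\ in_monoid2 b c (k * a)).
  by exists b; split=> //; exists a, 0; lia.
by exists k, r, s; split=> // k' /andP[k'_gt0 lt_k'k]; move/kmin: lt_k'k; tauto.
Qed.

(* Write [a = m d], [u = m' d] with [d = gcd(a, u)]; as [m'] divides the least
   [k], the solution [x < m'] of [x m = v (mod m')] must give [v = x m + y m'],
   since otherwise [x a] would be a smaller multiple of [a] in <v, u>. *)
Lemma apery_box_of_binomial_relation (S : pred nat) a v u k r :
  cofinite S -> generated3 S a v u ->
  0 < a -> 0 < u -> 0 < k -> no_multiple_below a v u k -> k * a = r * u ->
  has_apery_box S.
Proof.
move=> S_cofin G a_gt0 u_gt0 k_gt0 kmin Ek.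
set d := gcdn a u; set m := a %/ d; set m' := u %/ d.
have d_gt0 : 0 < d by rewrite gcdn_gt0 a_gt0.
have Ea : a = m * d by rewrite divnK // dvdn_gcdl.
have Eu : u = m' * d by rewrite divnK // dvdn_gcdr.
have co_mm' : coprime m m'.
  by rewrite /coprime -(eqn_pmul2r d_gt0) muln_gcdl -Ea -Eu mul1n.
have m_gt0 : 0 < m by move: a_gt0; rewrite Ea muln_gt0 => /andP[].
have m'_gt0 : 0 < m' by move: u_gt0; rewrite Eu muln_gt0 => /andP[].
have co_dv : coprime d v.
  apply/eqP; apply: (generated3_coprime S_cofin G).
  - exact: dvdn_trans (dvdn_gcdl _ _) (dvdn_gcdl _ _).
  - exact: dvdn_gcdr.
  - exact: dvdn_trans (dvdn_gcdl _ _) (dvdn_gcdr _ _).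
have le_m'k : m' <= k.
  apply: dvdn_leq => //; rewrite -(@Gauss_dvdl _ _ m) 1?coprime_sym //.
  have -> : k * m = r * m' by apply/eqP; rewrite -(eqn_pmul2r d_gt0) -!mulnA -Ea -Eu Ek.
  exact: dvdn_mull.
have [x lt_xm' Ex] := exists_mulnr_mod v co_mm' m'_gt0.
case: (leqP (x * m) v) => [le_xm_v | lt_v_xm].
  move/esym/eqP: Ex; rewrite eqn_mod_dvd // => /dvdnP [y Ey].
  exists a, u, v, m, d; apply: (gluing_apery_box G Ea Eu co_mm' co_dv (x := x) (y := y)) => //.
  lia.
move/eqP: Ex; rewrite eqn_mod_dvd; last exact: ltnW.
move=> /dvdnP [y Ey].
have x_gt0 : 0 < x by case: x lt_xm' lt_v_xm Ey.
have x_range : 0 < x < k by rewrite x_gt0 /=; exact: leq_trans lt_xm' le_m'k.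
by case: (kmin x x_range); exists d, y; rewrite Ea mulnA Eu; nia.
Qed.

(** * Non-glued three-generated semigroups are not symmetric *)

Lemma inS_nat (S : pred nat) (n : nat) : inS S n = S n.
Proof. by rewrite /inS absz_nat. Qed.

Section NonGluedRelations.

Variables (S : pred nat) (n1 n2 n3 : nat).
Hypotheses (G : generated3 S n1 n2 n3)
  (n1_gt0 : 0 < n1) (n2_gt0 : 0 < n2) (n3_gt0 : 0 < n3).

Lemma relation_coef_lt c1 c3 r12 r13 r31 r32 :
  no_multiple_below n1 n2 n3 c1 ->
  c1 * n1 = r12 * n2 + r13 * n3 -> c3 * n3 = r31 * n1 + r32 * n2 ->
  0 < r31 -> 0 < r32 -> r13 < c3.
Proof.
move=> c1min E1 E3 r31_gt0 r32_gt0; rewrite ltnNge; apply/negP => le_c3_r13.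
have [le_c1_r31 | lt_r31_c1] := leqP c1 r31; first by nia.
apply: (@c1min (c1 - r31)); first by lia.
by exists (r12 + r32), (r13 - c3); nia.
Qed.

Variables (c1 C2 c3 r12 R13 r21 r23 : nat).
Hypotheses (c1min : no_multiple_below n1 n2 n3 c1)
  (c2min : no_multiple_below n2 n1 n3 C2.+1)
  (c3min : no_multiple_below n3 n1 n2 c3)
  (E1 : c1 * n1 = r12 * n2 + R13.+1 * n3)
  (E2 : C2.+1 * n2 = r21 * n1 + r23 * n3)
  (r21_gt0 : 0 < r21) (le_r12_C2 : r12 <= C2) (lt_R13_c3 : R13.+1 < c3).

(* A representation of [w - n1] in S would produce a multiple of [n1], [n2] or
   [n3] in the monoid of the other two below the least one. *)
Lemma apery_of_relations : apery S n1 (C2 * n2 + R13 * n3).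
Proof.
have c1_gt0 : 0 < c1 by nia.
apply/andP; split; first by apply/G; exists 0, C2, R13; lia.
apply/negP => /andP [le_n1 /G [x [y [z Ew]]]].
have {le_n1}Ew' : C2 * n2 + R13 * n3 = x.+1 * n1 + y * n2 + z * n3 by lia.
have [lt_C2_y | le_y_C2] := ltnP C2 y.
  have [le_R13_z | lt_z_R13] := leqP R13 z; first by nia.
  apply: (@c3min (R13 - z)); first by nia.
  by exists x.+1, (y - C2); nia.
have [lt_R13_z | le_z_R13] := ltnP R13 z.
  apply: (@c2min (C2 - y)); first by nia.
  by exists x.+1, (z - R13); nia.
have [lt_x_c1 | le_c1_x] := ltnP x.+1 c1.
  apply: (@c1min x.+1); first by nia.
  by exists (C2 - y), (R13 - z); nia.
have [le_C2y_r12 | lt_r12_C2y] := leqP (C2 - y) r12; first by nia.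
apply: (@c2min (C2 - y - r12)); first by nia.
by exists (x.+1 - c1), z.+1; nia.
Qed.

Lemma shifted_of_relations :
  shifted S n1 (C2 * n2 + R13 * n3 + n2) /\ shifted S n1 (C2 * n2 + R13 * n3 + n3).
Proof.
have c1_gt0 : 0 < c1 by nia.
split; apply/andP; split; try nia; apply/G.
  by exists r21.-1, 0, (r23 + R13); nia.
by exists c1.-1, (C2 - r12), 0; nia.
Qed.

End NonGluedRelations.

(* [w - n1] is a pseudo-Frobenius number, and in a symmetric semigroup the
   Frobenius number is the only one. *)
Lemma symmetric_apery_maximal (S : pred nat) n1 n2 n3 (f : int) w :
  generated3 S n1 n2 n3 -> (forall a b, S a -> S b -> S (a + b)) ->
  ~~ inS S f -> (forall z, inS S z \/ inS S (f - z)%R) ->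
  apery S n1 w -> shifted S n1 (w + n2) -> shifted S n1 (w + n3) ->
  f = (w%:Z - n1%:Z)%R.
Proof.
move=> G S_add Sf sym /andP [Sw not_shifted_w] /andP [le2 S2] /andP [le3 S3].
have [Sw'|] := sym (w%:Z - n1%:Z)%R.
  case/negP: not_shifted_w; move: Sw'; rewrite /inS => /andP [le_n1w Sw'].
  by apply/andP; split; [lia | have -> : w - n1 = `|(w%:Z - n1%:Z)%R|%N by lia].
rewrite /inS => /andP [ge0 /G [x [y [z Ef]]]].
have {}Ef : (f = w%:Z - n1%:Z + (x * n1 + y * n2 + z * n3)%N)%R by rewrite -Ef; lia.
have notS t s : S t -> S s -> (f = (t + s)%N%:Z)%R -> False.
  by move=> St Ss Eft; move: Sf; rewrite Eft inS_nat S_add.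
case: x Ef => [|x] Ef; last first.
  by exfalso; apply: (notS _ (x * n1 + y * n2 + z * n3) Sw); [apply/G; exists x, y, z | lia].
case: y Ef => [|y] Ef; last first.
  by exfalso; apply: (notS _ (y * n2 + z * n3) S2); [apply/G; exists 0, y, z; lia | lia].
case: z Ef => [|z] Ef; last first.
  by exfalso; apply: (notS _ (z * n3) S3); [apply/G; exists 0, 0, z; lia | lia].
by rewrite Ef; lia.
Qed.

(* When all three minimal relations involve three generators, Ap(S, n1) has
   the two maximal elements [(c2 - 1) n2 + (r13 - 1) n3] and
   [(c3 - 1) n3 + (r12 - 1) n2], which cannot both come from [F + n1]. *)
Lemma trinomial_relations_not_symmetric (S : pred nat) n1 n2 n3
    c1 c2 c3 r12 r13 r21 r23 r31 r32 (f : int) :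
  generated3 S n1 n2 n3 -> (forall a b, S a -> S b -> S (a + b)) ->
  ~~ inS S f -> (forall z, inS S z \/ inS S (f - z)%R) ->
  0 < n1 -> 0 < n2 -> 0 < n3 ->
  no_multiple_below n1 n2 n3 c1 -> no_multiple_below n2 n1 n3 c2 ->
  no_multiple_below n3 n1 n2 c3 ->
  c1 * n1 = r12 * n2 + r13 * n3 -> c2 * n2 = r21 * n1 + r23 * n3 ->
  c3 * n3 = r31 * n1 + r32 * n2 ->
  0 < r12 -> 0 < r13 -> 0 < r21 -> 0 < r23 -> 0 < r31 -> 0 < r32 -> False.
Proof.
move=> G S_add Sf sym n1_gt0 n2_gt0 n3_gt0 c1min c2min c3min E1 E2 E3 r12_gt0 r13_gt0
  r21_gt0 r23_gt0 r31_gt0 r32_gt0.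
have G' := generated3_swap23 G.
have E1' : c1 * n1 = r13 * n3 + r12 * n2 by lia.
have lt_r13_c3 := relation_coef_lt n1_gt0 n2_gt0 n3_gt0 c1min E1 E3 r31_gt0 r32_gt0.
have lt_r12_c2 := relation_coef_lt n1_gt0 n3_gt0 n2_gt0 (no_multiple_below23 c1min)
  E1' E2 r21_gt0 r23_gt0.
case: c2 c2min E2 lt_r12_c2 => [|C2] c2min E2 lt_r12_c2; first lia.
case: c3 c3min E3 lt_r13_c3 => [|C3] c3min E3 lt_r13_c3; first lia.
case: r12 E1 E1' r12_gt0 lt_r12_c2 => [|R12] // E1 E1' _ lt_r12_c2.
case: r13 E1 E1' r13_gt0 lt_r13_c3 => [|R13] // E1 E1' _ lt_r13_c3.
have lt_R12_C2 := ltnSE lt_r12_c2; have lt_R13_C3 := ltnSE lt_r13_c3.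
have [sh12 sh13] :=
  shifted_of_relations G n1_gt0 n2_gt0 n3_gt0 E1 E2 r21_gt0 lt_R12_C2 lt_r13_c3.
have [sh'13 sh'12] :=
  shifted_of_relations G' n1_gt0 n3_gt0 n2_gt0 E1' E3 r31_gt0 lt_R13_C3 lt_r12_c2.
have Ef := symmetric_apery_maximal G S_add Sf sym (apery_of_relations G n1_gt0 n2_gt0
  n3_gt0 c1min c2min c3min E1 E2 r21_gt0 lt_R12_C2 lt_r13_c3) sh12 sh13.
have Ef' := symmetric_apery_maximal G' S_add Sf sym
  (apery_of_relations G' n1_gt0 n3_gt0 n2_gt0 (no_multiple_below23 c1min) c3min c2min
     E1' E3 r31_gt0 lt_R13_C3 lt_r12_c2) sh'13 sh'12.
have Ew : C2 * n2 + R13 * n3 = C3 * n3 + R12 * n2 by rewrite Ef in Ef'; lia.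
apply: (@c2min (C2 - R12)); first by lia.
by exists 0, (C3 - R13); nia.
Qed.

(** * Symmetric three-generated semigroups are complete intersections *)

Lemma has_apery_box_generated2 (S : pred nat) a b :
  cofinite S -> generated3 S a b 0 -> has_apery_box S.
Proof.
move=> S_cofin G.
have coprime_box a' b' : generated3 S a' b' 0 -> 0 < a' -> coprime a' b' -> has_apery_box S.
  move=> G' a'_gt0 co; exists a', b', 0, a', 1.
  by apply: (gluing_apery_box (generated3_swap23 G') _ _ co (coprime1n 0) (x := 0) (y := 0));
    rewrite ?muln1.
have [a0 | a_gt0] := posnP a; last first.
  apply: (coprime_box _ _ G a_gt0); apply/eqP.
  by apply: (generated3_coprime S_cofin G); rewrite ?dvdn_gcdl ?dvdn_gcdr ?dvdn0.
subst a; have b1 : b = 1 by apply: (generated3_coprime S_cofin G); rewrite ?dvdn0.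
by subst b; apply: (coprime_box _ _ (generated3_swap12 G)); rewrite ?coprimen1.
Qed.

Lemma one_sided_relation_apery_box (S : pred nat) a b c k r s :
  cofinite S -> generated3 S a b c ->
  0 < a -> 0 < b -> 0 < c -> 0 < k -> no_multiple_below a b c k ->
  k * a = r * b + s * c -> r = 0 \/ s = 0 -> has_apery_box S.
Proof.
move=> S_cofin G a_gt0 b_gt0 c_gt0 k_gt0 kmin E [r0 | s0].
  by apply: (apery_box_of_binomial_relation S_cofin G _ _ k_gt0 kmin (r := s)) => //; lia.
apply: (apery_box_of_binomial_relation S_cofin (generated3_swap23 G) _ _ k_gt0
  (no_multiple_below23 kmin) (r := r)) => //; lia.
Qed.

Lemma symmetric3_has_apery_box (S : pred nat) a b c (f : int) :
  cofinite S -> (forall x y, S x -> S y -> S (x + y)) ->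
  generated3 S a b c -> ~~ inS S f -> (forall z, inS S z \/ inS S (f - z)%R) ->
  has_apery_box S.
Proof.
move=> S_cofin S_add G Sf sym.
have [c0 | c_gt0] := posnP c; first by subst c; exact: has_apery_box_generated2 G.
have [a0 | a_gt0] := posnP a.
  subst a; apply: (has_apery_box_generated2 S_cofin).
  exact: generated3_swap23 (generated3_swap12 G).
have [b0 | b_gt0] := posnP b.
  by subst b; apply: (has_apery_box_generated2 S_cofin (generated3_swap23 G)).
have G2 := generated3_swap12 G; have G3 := generated3_swap12 (generated3_swap23 G).
have [k1 [r12 [r13 [k1_gt0 E1 k1min]]]] := exists_least_multiple c a_gt0 b_gt0.
have [k2 [r21 [r23 [k2_gt0 E2 k2min]]]] := exists_least_multiple c b_gt0 a_gt0.
have [k3 [r31 [r32 [k3_gt0 E3 k3min]]]] := exists_least_multiple b c_gt0 a_gt0.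
have box1 := one_sided_relation_apery_box S_cofin G a_gt0 b_gt0 c_gt0 k1_gt0 k1min E1.
have box2 := one_sided_relation_apery_box S_cofin G2 b_gt0 a_gt0 c_gt0 k2_gt0 k2min E2.
have box3 := one_sided_relation_apery_box S_cofin G3 c_gt0 a_gt0 b_gt0 k3_gt0 k3min E3.
have [r12_0 | r12_gt0] := posnP r12; first exact: box1 (or_introl r12_0).
have [r13_0 | r13_gt0] := posnP r13; first exact: box1 (or_intror r13_0).
have [r21_0 | r21_gt0] := posnP r21; first exact: box2 (or_introl r21_0).
have [r23_0 | r23_gt0] := posnP r23; first exact: box2 (or_intror r23_0).
have [r31_0 | r31_gt0] := posnP r31; first exact: box3 (or_introl r31_0).
have [r32_0 | r32_gt0] := posnP r32; first exact: box3 (or_intror r32_0).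
by case: (trinomial_relations_not_symmetric G S_add Sf sym a_gt0 b_gt0 c_gt0
  k1min k2min k3min E1 E2 E3 r12_gt0 r13_gt0 r21_gt0 r23_gt0 r31_gt0 r32_gt0).
Qed.

(** * Semigroups with an Apery box are cyclotomic *)

Section SemigroupPolynomial.

Local Open Scope ring_scope.

Lemma coef_semigroup_poly (S : pred nat) N n : (forall m, (N <= m)%N -> S m) ->
  (semigroup_poly S N)`_n = (S n)%:R - ((0 < n)%N && S n.-1)%:R.
Proof.
move=> SN; rewrite coef_poly; case: ltnP => // lt_Nn.
by rewrite (_ : 0 < n)%N ?SN ?subrr //; lia.
Qed.

(* Multiplying [sum_(s in S) x^s] by [1 - x^n] leaves the generating series of
   Ap(S, n); here this is checked coefficientwise on the truncation [P_S]. *)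
Lemma semigroup_poly_mul_1subXn (S : pred nat) N n (W : {poly int}) :
  (forall m, (N <= m)%N -> S m) -> (0 < n)%N -> S 0 -> S n ->
  (forall s, S s -> S (s + n)%N) -> (forall x, W`_x = (apery S n x)%:R) ->
  semigroup_poly S N * (1 - 'X^n) = (1 - 'X) * W.
Proof.
move=> SN n_gt0 S0 Sn S_addn coefW; apply/polyP => x.
rewrite mulrBr mulr1 mulrBl mul1r !coefB coefMXn coefXM !coefW !coef_semigroup_poly //.
rewrite /apery /shifted; case: x => [|x] /=.
  by rewrite n_gt0 S0 leqn0 (gtn_eqF n_gt0) /= !subr0.
case: (ltngtP x.+1 n) => [lt_xn | lt_nx | eq_xn] /=.
- by rewrite leqNgt (ltnW lt_xn) /= !andbT subr0.
- have le_nx : (n <= x)%N := lt_nx.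
  have := S_addn (x - n)%N; have := S_addn (x - n).+1.
  rewrite subSn //= addSn subnK // le_nx.
  case: (S x.+1); case: (S x); case: (S (x - n).+1); case: (S (x - n)%N) => //= h1 h2;
    rewrite ?subr0 ?sub0r ?subrr ?opprK //; by [have := h1 isT | have := h2 isT].
- subst n; rewrite subnn Sn S0 !ltnn /= andbT.
  by rewrite subr0 sub0r addrC addKr.
Qed.

Definition apery_poly m d u v : {poly int} :=
  \sum_(a < m) \sum_(k < d) 'X^(a * u + k * v).

Lemma coef_apery_poly (S : pred nat) n u v m d : apery_box S n u v m d ->
  forall x, (apery_poly m d u v)`_x = (apery S n x)%:R.
Proof.
move=> box x; have [_ _ _ _ U] := box.
rewrite /apery_poly coef_sum; under eq_bigr => a _ do rewrite coef_sum.
under eq_bigr => a _ do under eq_bigr => k _ do rewrite coefXn.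
rewrite pair_bigA /=.
set P := [pred p : 'I_m * 'I_d | x == p.1 * u + p.2 * v]%N.
have -> : \sum_(p : 'I_m * 'I_d) (x == p.1 * u + p.2 * v)%N%:R = #|P|%:R :> int.
  by rewrite -sum1_card natr_sum [RHS]big_mkcond; apply: eq_bigr => p _; rewrite inE; case: eqP.
case: (boolP (apery S n x)) => [/(apery_boxP _ box) [a [k [lt_am lt_kd Ex]]] | not_apery].
  rewrite (@eq_card1 _ (Ordinal lt_am, Ordinal lt_kd)) // => -[a' k']; rewrite !inE /=.
  apply/eqP/eqP => [Ex' | [-> ->] //].
  have Eaa' : (0 * n + a * u + k * v = 0 * n + a' * u + k' * v)%N by lia.
  have [_ eq_a eq_k] := U 0 a k 0 a' k' lt_am lt_kd (ltn_ord a') (ltn_ord k') Eaa'.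
  by congr (_, _); apply/val_inj.
rewrite eq_card0 // => -[a k]; rewrite !inE /=; apply/negP => /eqP Ex.
by case/negP: not_apery; apply/(apery_boxP _ box); exists a, k; split.
Qed.

Lemma geometric_sum_root_norm (C : numDomainType) (z : C) (p u : nat) : (0 < p)%N ->
  \sum_(i < p) z ^+ (i * u) = 0 -> `|z| <= 1.
Proof.
move=> p_gt0 sum0.
have {}sum0 : \sum_(i < p) (z ^+ u) ^+ i = 0.
  by rewrite -[RHS]sum0; apply: eq_bigr => i _; rewrite -exprM mulnC.
have [zu1 | zu_neq1] := eqVneq (z ^+ u) 1.
  move: sum0; under eq_bigr => i _ do rewrite zu1 expr1n.
  by rewrite sumr_const card_ord => /eqP; rewrite pnatr_eq0; lia.
have u_gt0 : (0 < u)%N by case: u zu_neq1 {sum0} => //; rewrite expr0 eqxx.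
have := subrXX 1 (z ^+ u) p; under eq_bigr => i _ do rewrite expr1n mul1r.
rewrite sum0 mulr0 expr1n => /eqP; rewrite subr_eq0 => /eqP /esym zup1.
have : `|z| ^+ (u * p) = 1 by rewrite -normrX exprM zup1 normr1.
by move/eqP; rewrite pexpr_eq1 ?normr_ge0 ?muln_gt0 ?u_gt0 // => /eqP ->.
Qed.

Lemma horner_apery_poly (C : comNzRingType) m d u v (z : C) :
  (map_poly intr (apery_poly m d u v)).[z] =
  (\sum_(a < m) z ^+ (a * u)) * \sum_(k < d) z ^+ (k * v).
Proof.
rewrite rmorph_sum horner_sum mulr_suml; apply: eq_bigr => a _.
rewrite rmorph_sum horner_sum mulr_sumr; apply: eq_bigr => k _.
by rewrite /= map_polyXn hornerXn exprD.
Qed.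

Lemma cyclotomic_of_apery_box (S : pred nat) N n u v m d :
  (forall x, (N <= x)%N -> S x) -> apery_box S n u v m d -> cyclotomic_semigroup S.
Proof.
move=> SN box; have [n_gt0 m_gt0 d_gt0 G _] := box.
have S0 : S 0 by apply/G; exists 0, 0, 0; split.
have Sn : S n by apply/G; exists 1, 0, 0; split; rewrite // mul1n !addn0.
have E := semigroup_poly_mul_1subXn SN n_gt0 S0 Sn (apery_box_addn box) (coef_apery_poly box).
exists N; split=> // z /rootP Pz.
move/(congr1 (fun p => (map_poly (intr : int -> algC) p).[z])): E.
rewrite /= !rmorphM !rmorphB !rmorph1 /= map_polyXn map_polyX !hornerM Pz mul0r.
rewrite horner_apery_poly !hornerE => /esym/eqP; rewrite !mulf_eq0 -!orbA subr_eq0.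
case/or3P => [/eqP <- | /eqP | /eqP]; first by rewrite normr1.
  exact: geometric_sum_root_norm.
exact: geometric_sum_root_norm.
Qed.

(** * Cyclotomic semigroups are symmetric *)

Lemma prod_norm_le1_eq1 (R : numDomainType) (rs : seq R) :
  (forall r, r \in rs -> `|r| <= 1) -> \prod_(r <- rs) `|r| = 1 ->
  forall r, r \in rs -> `|r| = 1.
Proof.
elim: rs => [|r0 rs IH] //= le1; rewrite big_cons => prod1 r.
have le1_r0 : `|r0| <= 1 by apply: le1; rewrite mem_head.
have le1_rs r' : r' \in rs -> `|r'| <= 1 by move=> r'_rs; apply: le1; rewrite inE r'_rs orbT.
have le1_prod : \prod_(r <- rs) `|r| <= 1.
  by rewrite big_seq; apply: prodr_ile1 => r' r'_rs; rewrite normr_ge0 le1_rs.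
have r0_1 : `|r0| = 1.
  apply/le_anti; rewrite le1_r0 -[X in X <= _]prod1 -[X in _ <= X]mulr1 ler_wpM2l //.
rewrite inE => /predU1P [-> // | r_rs]; apply: IH => //.
by rewrite r0_1 mul1r in prod1.
Qed.

Lemma poly_eq_on_nonzero (R : numDomainType) (p q : {poly R}) :
  (forall x, x != 0 -> p.[x] = q.[x]) -> p = q.
Proof.
move=> Epq; apply/eqP; rewrite -subr_eq0; apply/negPn/negP => pq_neq0.
set xs := [seq i.+1%:R : R | i <- iota 0 (size (p - q))].
have roots_xs : all (root (p - q)) xs.
  by apply/allP => _ /mapP [i _ ->]; rewrite /root hornerD hornerN Epq ?subrr ?pnatr_eq0.
have uniq_xs : uniq xs.
  by rewrite map_inj_uniq ?iota_uniq // => i j /eqP; rewrite eqr_nat => /eqP [].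
by have := max_poly_roots pq_neq0 roots_xs uniq_xs; rewrite size_map size_iota ltnn.
Qed.

(* The roots lie in the closed disc and their product is [+-p(0) = +-1], so
   they lie on the unit circle, where [1/r = conj r]: the reciprocal polynomial
   [x^n p(1/x)] is then the conjugate of [p], that is [p] itself. *)
Lemma palindromic_of_roots_in_disc (C : numClosedFieldType) (p : {poly C}) :
  p \is monic -> p.[0] = 1 -> map_poly Num.conj p = p ->
  (forall z, root p z -> `|z| <= 1) ->
  forall i, (i <= (size p).-1)%N -> p`_i = p`_((size p).-1 - i).
Proof.
move=> p_monic p0 p_real p_disc.
have [rs Ep] := closed_field_poly_normal p.
rewrite (monicP p_monic) scale1r in Ep.
set n := size rs.
have size_p : size p = n.+1 by rewrite Ep size_prod_XsubC.
have prod_opp_rs : \prod_(r <- rs) (- r) = 1.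
  by rewrite -[RHS]p0 Ep horner_prod; apply: eq_bigr => r _; rewrite hornerXsubC sub0r.
have norm_rs : forall r, r \in rs -> `|r| = 1.
  apply: prod_norm_le1_eq1 => [r r_rs | ]; first by apply: p_disc; rewrite Ep root_prod_XsubC.
  have := congr1 Num.norm prod_opp_rs; rewrite normr_prod normr1 => {2}<-.
  by apply: eq_bigr => r _; rewrite normrN.
have inv_rs r : r \in rs -> r^-1 = r^*.
  by move=> r_rs; rewrite invC_norm norm_rs // expr1n invr1 mul1r.
have rs_neq0 r : r \in rs -> r != 0 by move=> r_rs; rewrite -normr_eq0 norm_rs ?oner_eq0.
have reciprocal x : x != 0 -> x ^+ n * p.[x^-1] = p.[x].
  move=> x_neq0.
  have -> : x ^+ n = \prod_(r <- rs) x.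
    rewrite big_const_seq count_predT /n; elim: (size rs) => [|k IHk]; first by rewrite expr0.
    by rewrite exprS IHk.
  rewrite {1}Ep horner_prod -big_split /=.
  have -> : \prod_(r <- rs) (x * ('X - r%:P).[x^-1]) = \prod_(r <- rs) ((x - r^*) * (- r)).
    rewrite big_seq_cond [RHS]big_seq_cond; apply: eq_bigr => r /andP [r_rs _].
    rewrite hornerXsubC -(inv_rs r r_rs) mulrBr mulfV // mulrBl.
    by rewrite mulrN mulrN mulVf ?rs_neq0 // opprK addrC.
  rewrite big_split /= prod_opp_rs mulr1 -p_real Ep rmorph_prod horner_prod.
  by apply: eq_bigr => r _; rewrite /= map_polyXsubC hornerXsubC.
have p_reciprocal : \poly_(i < n.+1) p`_(n - i) = p.
  apply: poly_eq_on_nonzero => x x_neq0.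
  rewrite -(reciprocal x x_neq0) horner_poly (horner_coef p) size_p mulr_sumr.
  rewrite (reindex_inj rev_ord_inj) /=; apply: eq_bigr => i _.
  have le_in : (i <= n)%N by have := ltn_ord i; lia.
  rewrite (_ : n - (n.+1 - i.+1) = i)%N; last by lia.
  by rewrite (_ : n.+1 - i.+1 = n - i)%N // exprVn mulrCA exprB ?unitfE.
move=> i; rewrite size_p /= => le_in.
by rewrite -[in LHS]p_reciprocal coef_poly ltnS le_in.
Qed.

Lemma symmetric_semigroupI (S : pred nat) (f : int) :
  ~~ inS S f -> (forall z, f < z -> inS S z) ->
  (forall k : nat, k%:Z <= f -> S k || inS S (f - k%:Z)) -> symmetric_semigroup S.
Proof.
move=> Sf S_gt_f dual; exists f; split=> // z.
have [z_lt0 | z_ge0] := ltrP z 0; first by right; apply: S_gt_f; lia.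
have [f_lt_z | z_le_f] := ltrP f z; first by left; apply: S_gt_f.
have [k Ez] : exists k : nat, z = k%:Z by exists `|z|%N; lia.
by subst z; rewrite inS_nat; case/orP: (dual k z_le_f); [left | right].
Qed.

Lemma semigroup_poly_coef_duality (S : pred nat) N F :
  (forall m, (N <= m)%N -> S m) -> S 0 -> ~~ S F ->
  (forall k, (k <= F.+1)%N -> (semigroup_poly S N)`_k = (semigroup_poly S N)`_(F.+1 - k)%N) ->
  forall k, (k <= F)%N -> S k = ~~ S (F - k)%N.
Proof.
move=> SN S0 SF palindromic; elim=> [|k IHk] lt_kF; first by rewrite S0 subn0 SF.
have := palindromic k.+1 (ltnW lt_kF).
rewrite !coef_semigroup_poly // subSS /= subn_gt0 lt_kF -subnS.
by rewrite (IHk (ltnW lt_kF)); case: (S k.+1); case: (S (F - k)%N); case: (S (F - k.+1)%N).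
Qed.

Lemma semigroup_poly_palindromic (S : pred nat) N F :
  (forall m, (N <= m)%N -> S m) -> S 0 -> ~~ S F -> (forall k, (F < k)%N -> S k) ->
  (forall z : algC, root (map_poly intr (semigroup_poly S N)) z -> `|z| <= 1) ->
  forall k, (k <= F.+1)%N -> (semigroup_poly S N)`_k = (semigroup_poly S N)`_(F.+1 - k)%N.
Proof.
move=> SN S0 SF S_gt_F disc k le_kF.
set Q := semigroup_poly S N; set p := map_poly (intr : int -> algC) Q.
have coef_Q := coef_semigroup_poly _ SN.
have size_Q : size Q = F.+2.
  apply/eqP; rewrite eqn_leq; apply/andP; split.
    apply/leq_sizeP => j lt_Fj; have j_gt0 : (0 < j)%N by lia.
    by rewrite coef_Q j_gt0 !S_gt_F ?subrr //; lia.
  rewrite ltnNge; apply/negP => /leq_sizeP /(_ F.+1 (leqnn _)).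
  by rewrite coef_Q S_gt_F //= (negbTE SF) subr0.
have coef_p j : p`_j = (Q`_j)%:~R by rewrite coef_map_id0.
have size_p : size p = F.+2 by rewrite size_map_inj_poly ?size_Q //; exact: intr_inj.
have p_monic : p \is monic.
  by rewrite monicE /lead_coef size_p coef_p coef_Q S_gt_F //= (negbTE SF) subr0.
have p0 : p.[0] = 1 by rewrite horner_coef0 coef_p coef_Q S0 /= subr0.
have p_real : map_poly Num.conj p = p.
  rewrite -map_poly_comp; apply: eq_map_poly => j /=.
  exact: (rmorph_int (@Num.conj algC : {rmorphism algC -> algC})).
apply: (@intr_inj algC); rewrite -!coef_p.
by have := palindromic_of_roots_in_disc p_monic p0 p_real disc; rewrite size_p; apply.
Qed.

Lemma symmetric_of_cyclotomic (S : pred nat) :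
  numerical_semigroup S -> cyclotomic_semigroup S -> symmetric_semigroup S.
Proof.
move=> [S0 _ _] [N [SN disc]].
case: (boolP [forall i : 'I_N, S i]) => [/forallP S_lt_N | /forallPn [g not_Sg]].
  have S_nat k : S k by case: (ltnP k N) => [lt_kN | /SN //]; exact: S_lt_N (Ordinal lt_kN).
  apply: (symmetric_semigroupI (f := -1)) => [| z lt_z | k];
    by rewrite /inS ?S_nat ?andbT //; lia.
have gap_le_N k : ~~ S k -> (k <= N)%N.
  by move=> not_Sk; case: leqP => // /ltnW /SN; rewrite (negbTE not_Sk).
have [F SF F_max] := ex_maxnP (ex_intro (fun k => ~~ S k) g not_Sg) gap_le_N.
have S_gt_F k : (F < k)%N -> S k by move=> lt_Fk; apply: contraT => /F_max; lia.
have dual := semigroup_poly_coef_duality SN S0 SF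
  (semigroup_poly_palindromic SN S0 SF S_gt_F disc).
apply: (symmetric_semigroupI (f := F%:Z)) => [| z lt_Fz | k le_kF]; rewrite ?inS_nat //.
  by rewrite /inS; apply/andP; split; [lia | apply: S_gt_F; lia].
have -> : (F%:Z - k%:Z = (F - k)%N%:Z)%R by lia.
by rewrite inS_nat dual; [case: (S (F - k)%N) | lia].
Qed.

End SemigroupPolynomial.

Unset Implicit Arguments.

Theorem lemma5 (S : pred nat) :
  numerical_semigroup S ->
  (exists e, is_embdim S e /\ e <= 3) ->
  (cyclotomic_semigroup S <-> symmetric_semigroup S).
Proof.
move=> S_num [e [[[A [size_A G]] _] le_e3]].
split; first exact: symmetric_of_cyclotomic.
move=> [f [[Sf _] sym]]; have [_ S_add [N SN]] := S_num.
have G3 := generated3_of_generates G (leq_trans (eq_leq size_A) le_e3).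
have [n [u [v [m [d box]]]]] := symmetric3_has_apery_box (ex_intro _ N SN) S_add G3 Sf sym.
exact: cyclotomic_of_apery_box SN box.
Qed.
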